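(* Let $\{Y_k\}_{k\ge 0}$ be a real-valued discrete stochastic process adapted to a filtration $\{\mathcal{F}_k\}_{k \ge 0}$, where $\mathcal{F}_0$ is the trivial $\sigma$-algebra. Suppose that for some $a, b, \eta, \rho, D \in \mathbb{R}$ with $a < b$, $\eta > 0$, $0 < \rho < 1$ and $D \ge 1$: (C0) $Y_0 \in [0,a)$ almost surely; (C1) $\mathbb{E}[e^{\eta(Y_{k+1} - Y_k)}\mathbb{1}_{\{a \le Y_k < b\}} \mid \mathcal{F}_k] \le \rho$ almost surely for every $k \ge 1$; (C2) $\mathbb{E}[e^{\eta(Y_{k+1} - a)}\mathbb{1}_{\{Y_k < a\}} \mid \mathcal{F}_k] \le D$ almost surely for every $k \ge 1$. Let $\tau_b := \min\{j : Y_j \ge b\}$. Then for every $k \ge 1$, $$\mathbb{E}\big[e^{\eta Y_k}\mathbb{1}_{\{\tau_b > k-1\}}\big] \le e^{\eta a}\Big(\rho^k + \frac{1-\rho^k}{1-\rho} D\Big).$$ *)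

From HB Require Import structures.
From mathcomp Require Import all_boot all_order all_algebra.
From mathcomp Require Import all_classical all_reals all_analysis measurable_realfun.
Set Implicit Arguments. Unset Strict Implicit. Unset Printing Implicit Defensive.
Import Order.TTheory GRing.Theory Num.Theory.
Local Open Scope classical_set_scope.
Local Open Scope ring_scope.

Section defs.
Context {d : measure_display} {T : measurableType d} {R : realType}.

Definition sub_sigma_algebra (G : set (set T)) : Prop :=
  sigma_algebra setT G /\ G `<=` measurable.

Definition G_measurable (G : set (set T)) (f : T -> R) : Prop :=
  forall B : set R, measurable B -> G (f @^-1` B).

Definition G_emeasurable (G : set (set T)) (g : T -> \bar R) : Prop :=
  forall B : set (\bar R), measurable B -> G (g @^-1` B).

Definition filtration (F : nat -> set (set T)) : Prop :=
  (forall k, sub_sigma_algebra (F k)) /\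
  (forall n m, (n <= m)%N -> F n `<=` F m).

Definition trivial_sigma : set (set T) := [set A | A = set0 \/ A = setT].

Definition adapted (F : nat -> set (set T)) (Y : nat -> T -> R) : Prop :=
  forall k, G_measurable (F k) (Y k).

(* g is a version of the conditional expectation E[X | G] of the nonnegative
   random variable X (values in [0, +oo]):  g is G-measurable, nonnegative,
   and  \int_A g dP = \int_A X dP  for every A in G. *)
Definition cond_exp_version (P : probability T R) (G : set (set T))
    (X : T -> \bar R) (g : T -> \bar R) : Prop :=
  [/\ G_emeasurable G g, (forall x, (0 <= g x)%E) &
      forall A, G A -> (\int[P]_(x in A) g x = \int[P]_(x in A) X x)%E].

Definition cond_exp_le (P : probability T R) (G : set (set T))
    (X : T -> \bar R) (c : R) : Prop :=
  exists g, cond_exp_version P G X g /\ {ae P, forall x, (g x <= c%:E)%E}.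

(* the event {tau_b > m}, where tau_b := min {j | Y_j >= b} (min of the
   empty set = +oo): no index j <= m has Y_j >= b *)
Definition tau_gt (Y : nat -> T -> R) (b : R) (m : nat) : set T :=
  [set x | forall j, (j <= m)%N -> Y j x < b].

End defs.

(* Write J n for E[exp(eta Y_n) 1_{tau_b > n-1}].  On {tau_b > n} either
   a <= Y_n < b, and exp(eta Y_(n+1)) = exp(eta Y_n) exp(eta (Y_(n+1) - Y_n)),
   or Y_n < a, and exp(eta Y_(n+1)) = exp(eta a) exp(eta (Y_(n+1) - a)).
   As exp(eta Y_n) 1_{tau_b > n-1} is F_n-measurable, (C1) and (C2) then give
   J (n+1) <= rho J n + D exp(eta a), while (C0) gives J 0 <= exp(eta a);
   unrolling this affine recursion yields the bound.  The conditional bounds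
   enter through E[h X] <= c E[h] for nonnegative F_n-measurable h, which holds
   for simple h and passes to the limit by monotone convergence. *)

From Pilot Require Import Defs.
From HB Require Import structures.
From mathcomp Require Import all_boot all_order all_algebra.
From mathcomp Require Import all_classical all_reals all_analysis measurable_realfun.
From mathcomp Require Import ring.
Import Order.TTheory GRing.Theory Num.Theory.
Local Open Scope classical_set_scope.
Local Open Scope ring_scope.

Section sub_sigma_algebra.
Context {d : measure_display} {T : measurableType d} {R : realType}
  {G : set (set T)}.
Hypothesis sG : Defs.sub_sigma_algebra G.

Lemma g_sigma_measurableP (A : set T) :
  measurable (A : set (g_sigma_algebraType G)) <-> G A.
Proof. by rewrite /= (measurable_g_measurableTypeE sG.1). Qed.

Lemma G_measurableP (h : T -> R) :
  G_measurable G h <-> measurable_fun [set: g_sigma_algebraType G] h.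
Proof.
split=> [Gh _ B mB|mh B mB].
  by rewrite setTI; apply/g_sigma_measurableP; exact: Gh.
by apply/g_sigma_measurableP; have := mh measurableT B mB; rewrite setTI.
Qed.

Lemma G_measurable_measurable (h : T -> R) :
  G_measurable G h -> measurable_fun [set: T] h.
Proof. by move=> Gh _ B mB; rewrite setTI; apply: sG.2; exact: Gh. Qed.

Context {P : probability T R}.

Lemma cond_exp_le_integral (X : T -> \bar R) c : 0 <= c ->
  cond_exp_le P G X c ->
  forall A, G A -> (\int[P]_(x in A) X x <= c%:E * P A)%E.
Proof.
move=> c0 [g [[Gg g0 intg] gc]] A GA; have mA := sG.2 _ GA.
have mg : measurable_fun [set: T] g.
  by move=> _ B mB; rewrite setTI; apply: sG.2; exact: Gg.
rewrite -intg // -(integral_cst P mA).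
apply: ae_ge0_le_integral => //.
- exact: measurable_funS mg.
- by apply: filterS gc => x gxc _; exact: gxc.
Qed.

End sub_sigma_algebra.

Section weighted_integral.
Context {d : measure_display} {T : measurableType d} {R : realType}
  {P : probability T R} {G : set (set T)}.
Hypothesis sG : Defs.sub_sigma_algebra G.
Context {X : T -> R} {c : R}.
Hypotheses (mX : measurable_fun [set: T] X) (X_ge0 : forall x, 0 <= X x)
  (c_ge0 : 0 <= c).
Hypothesis X_cond_le : cond_exp_le P G (fun x => (X x)%:E) c.

Let integral_X_le A : G A -> (\int[P]_(x in A) (X x)%:E <= c%:E * P A)%E.
Proof. exact: cond_exp_le_integral. Qed.

Let weighted_le (s : T -> R) := [/\ measurable_fun [set: T] s,
  forall x, 0 <= s x &
  (\int[P]_x (s x * X x)%:E <= c%:E * \int[P]_x (s x)%:E)%E].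

Let weighted_le0 : weighted_le (fun=> 0).
Proof.
split=> //; under eq_integral do rewrite mul0r.
by rewrite integral0 mule0.
Qed.

Let weighted_leD s1 s2 : weighted_le s1 -> weighted_le s2 ->
  weighted_le (fun x => s1 x + s2 x).
Proof.
move=> [ms1 s1_ge0 s1X] [ms2 s2_ge0 s2X].
split; [exact: measurable_funD|by move=> x; rewrite addr_ge0|].
have msX (s : T -> R) : measurable_fun [set: T] s ->
    measurable_fun [set: T] (fun x => (s x * X x)%:E).
  by move=> ms; exact/measurable_EFinP/measurable_funM.
have sX_ge0 (s : T -> R) : (forall x, 0 <= s x) ->
    forall x, [set: T] x -> (0 <= (s x * X x)%:E)%E.
  by move=> s_ge0 x _; rewrite lee_fin mulr_ge0.
under eq_integral do rewrite mulrDl EFinD.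
rewrite ge0_integralD//; [|exact: sX_ge0|exact: msX|exact: sX_ge0|exact: msX].
under [X in (_ <= _ * X)%E]eq_integral do rewrite EFinD.
rewrite ge0_integralD//; last 4 first.
- by move=> x _; rewrite lee_fin.
- exact/measurable_EFinP.
- by move=> x _; rewrite lee_fin.
- exact/measurable_EFinP.
rewrite muleDr//; first exact: leeD.
by rewrite ge0_adde_def// inE integral_ge0// => x _; rewrite lee_fin.
Qed.

Let weighted_le_sum (I : Type) (r : seq I) (p : pred I) (s : I -> T -> R) :
  (forall i, weighted_le (s i)) ->
  weighted_le (fun x => \sum_(i <- r | p i) s i x).
Proof.
move=> ws; elim: r => [|i r IH].
  by under eq_fun do rewrite big_nil; exact: weighted_le0.
under eq_fun do rewrite big_cons.
by case: (p i) => //; exact: weighted_leD.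
Qed.

Let weighted_le_indic a A : 0 <= a -> G A -> weighted_le (fun x => a * \1_A x).
Proof.
move=> a_ge0 GA; have mA := sG.2 _ GA.
have mI : measurable_fun [set: T] (\1_A : T -> R) by exact: measurable_indic.
split; [exact: measurable_funM|by move=> x; rewrite mulr_ge0|].
under eq_integral do rewrite -mulrA EFinM.
rewrite ge0_integralZl_EFin//; last 2 first.
- by move=> x _; rewrite lee_fin mulr_ge0.
- exact/measurable_EFinP/measurable_funM.
under [X in (_ <= _ * X)%E]eq_integral do rewrite EFinM.
rewrite ge0_integralZl_EFin//; last exact/measurable_EFinP.
rewrite integral_indic// setIT muleCA lee_wpmul2l ?lee_fin//.
have -> : (\int[P]_x (\1_A x * X x)%:E = \int[P]_(x in A) (X x)%:E)%E.
  rewrite [RHS]integral_mkcond; apply: eq_integral => x _.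
  by rewrite epatch_indic EFinM muleC.
exact: integral_X_le.
Qed.

Context {h : T -> R}.
Hypotheses (Gh : G_measurable G h) (h_ge0 : forall x, 0 <= h x).

Let weighted_le_approx n : weighted_le (approx setT (EFin \o h) n).
Proof.
have preimage_h (B : set R) :
    setT `&` [set x | (EFin \o h) x \in EFin @` B] = h @^-1` B.
  apply/seteqP; split=> x /=; first by move=> [_]; rewrite inE => -[r rB [<-]].
  by move=> hx; split=> //; rewrite inE; exists (h x).
have G0 : G set0 by case: sG => -[].
apply: weighted_leD.
  apply: weighted_le_sum => k; apply: weighted_le_indic; first by rewrite mulr_ge0.
  rewrite /dyadic_approx; case: ifP => // _.
  by rewrite preimage_h; apply: Gh; exact: measurable_itv.
apply: weighted_le_indic => //.
have -> : integer_approx setT (EFin \o h) n = h @^-1` `[n%:R, +oo[.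
  by apply/seteqP; split=> x /=; rewrite in_itv /= andbT => -[].
by apply: Gh; exact: measurable_itv.
Qed.

Lemma cond_exp_le_integral_mul :
  (\int[P]_x (h x * X x)%:E <= c%:E * \int[P]_x (h x)%:E)%E.
Proof.
pose f := EFin \o h.
have f_ge0 x : [set: T] x -> (0 <= f x)%E by move=> _; rewrite lee_fin.
pose g n x := (approx setT f n x * X x)%:E.
have mg n : measurable_fun [set: T] (g n).
  have [ma _ _] := weighted_le_approx n.
  exact/measurable_EFinP/measurable_funM.
have g_ge0 n x : [set: T] x -> (0 <= g n x)%E.
  by have [_ ma_ge0 _] := weighted_le_approx n; rewrite lee_fin mulr_ge0.
have nd_g x : [set: T] x -> {homo g^~ x : n m / (n <= m)%N >-> (n <= m)%E}.
  by move=> _ n m nm; rewrite lee_fin ler_wpM2r//; exact/lefP/nd_approx.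
have lim_g x : limn (g^~ x) = (h x * X x)%:E.
  apply/cvg_lim => //; apply: cvg_EFin; first exact: nearW.
  by apply: cvgMr_tmp; exact: (cvg_approx f_ge0 Logic.I (ltry _)).
have int_g_cvg :=
  @cvg_monotone_convergence _ _ _ P _ measurableT _ mg g_ge0 nd_g.
have -> : (\int[P]_x (h x * X x)%:E = \int[P]_x limn (g^~ x))%E.
  by apply: eq_integral => x _; rewrite lim_g.
rewrite -(cvg_lim _ int_g_cvg)//; apply: lime_le; first exact: cvgP int_g_cvg.
apply: nearW => n; case: (weighted_le_approx n) => ma ma_ge0 /le_trans; apply.
rewrite lee_wpmul2l ?lee_fin//; apply: ge0_le_integral => //.
- by move=> x _; rewrite lee_fin.
- exact/measurable_EFinP.
- by apply/measurable_EFinP; exact: G_measurable_measurable Gh.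
- by move=> x _; exact: le_approx.
Qed.

End weighted_integral.

Section tau_gt.
Context {d : measure_display} {T : measurableType d} {R : realType}
  {Y : nat -> T -> R} {b : R}.

Lemma tau_gt0 : tau_gt Y b 0 = Y 0%N @^-1` `]-oo, b[.
Proof.
apply/seteqP; split=> x /=; rewrite in_itv /=; first exact.
by move=> Yb j; rewrite leqn0 => /eqP ->.
Qed.

Lemma tau_gtS m : tau_gt Y b m.+1 = tau_gt Y b m `&` Y m.+1 @^-1` `]-oo, b[.
Proof.
apply/seteqP; split=> x /=; rewrite in_itv /=.
  by move=> Yb; split=> [j jm|]; apply: Yb; rewrite ?(leq_trans jm).
by move=> [Yb Ymb] j; rewrite leq_eqVlt ltnS => /orP[/eqP ->|/Yb].
Qed.

Lemma tau_gt_subset_pred m : tau_gt Y b m `<=` tau_gt Y b m.-1.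
Proof. by move=> x Yb j jm; apply: Yb; rewrite (leq_trans jm) ?leq_pred. Qed.

Lemma tau_gt_adapted F : filtration F -> adapted F Y ->
  forall m, F m (tau_gt Y b m).
Proof.
move=> [sF homF] adY; elim=> [|m IH].
  by rewrite tau_gt0; apply: adY; exact: measurable_itv.
rewrite tau_gtS; apply/(g_sigma_measurableP (sF m.+1)).
apply: measurableI; apply/(g_sigma_measurableP (sF m.+1)); first exact: homF IH.
by apply: adY; exact: measurable_itv.
Qed.

End tau_gt.

Definition truncated_mgf {d} {T : measurableType d} {R : realType}
    (P : probability T R) (Y : nat -> T -> R) (b eta : R) n :=
  (\int[P]_x (expR (eta * Y n x) * \1_(tau_gt Y b n.-1) x)%:E)%E.

Section truncated_mgf.
Context {d : measure_display} {T : measurableType d} {R : realType}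
  {P : probability T R} {F : nat -> set (set T)} {Y : nat -> T -> R}
  {a b eta rho D : R}.
Local Notation J := (truncated_mgf P Y b eta).

Lemma expR_tau_gtS_le n x :
  expR (eta * Y n.+1 x) * \1_(tau_gt Y b n) x <=
  expR (eta * Y n x) * \1_(tau_gt Y b n.-1) x *
    (expR (eta * (Y n.+1 x - Y n x)) * \1_[set y | a <= Y n y < b] x) +
  expR (eta * a) * (expR (eta * (Y n.+1 x - a)) * \1_[set y | Y n y < a] x).
Proof.
have [xtau|xtau] := boolP (x \in tau_gt Y b n); last first.
  by rewrite indicE (negbTE xtau) mulr0 addr_ge0// !mulr_ge0 ?expR_ge0.
have Ynb : Y n x < b by exact: (set_mem xtau).
have xtau' := tau_gt_subset_pred _ _ (set_mem xtau).
rewrite !indicE xtau mem_set//= !mulr1.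
have [aYn|Yna] := leP a (Y n x).
  rewrite (@mem_set _ [set y | a <= Y n y < b] x) /=; last by rewrite aYn.
  rewrite (@memNset _ [set y | Y n y < a] x) /=; last by rewrite ltNge aYn.
  rewrite !mulr0 addr0 mulr1.
  by rewrite -expRD -mulrDr addrC subrK.
rewrite (@memNset _ [set y | a <= Y n y < b] x) /=; last by rewrite leNgt Yna.
rewrite (@mem_set _ [set y | Y n y < a] x) //= !mulr0 add0r mulr1.
by rewrite -expRD -mulrDr addrC subrK.
Qed.

Hypotheses (filtF : filtration F) (adaptY : adapted F Y).

Let sF n : Defs.sub_sigma_algebra (F n) := filtF.1 n.

Let mY n : measurable_fun [set: T] (Y n).
Proof. exact: G_measurable_measurable (sF n) _ (adaptY n). Qed.

Let mexpY n : measurable_fun [set: T] (fun x => expR (eta * Y n x)).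
Proof. by apply: measurableT_comp => //; exact: measurable_funM. Qed.

Let mY_itv n (i : interval R) : measurable (Y n @^-1` [set` i]).
Proof. by apply: (sF n).2; apply: adaptY; exact: measurable_itv. Qed.

Let mtau m : measurable (tau_gt Y b m).
Proof. by apply: (sF m).2; exact: tau_gt_adapted. Qed.

Lemma truncated_mgf0_le : 0 <= eta -> {ae P, forall x, Y 0%N x < a} ->
  (J 0 <= (expR (eta * a))%:E)%E.
Proof.
move=> eta_ge0 Y0a.
apply: (@le_trans _ _ (\int[P]_x (cst (expR (eta * a))%:E) x)%E); last first.
  rewrite integral_cst// -[leRHS]mule1.
  by rewrite lee_wpmul2l ?lee_fin ?expR_ge0 ?probability_le1.
apply: ae_ge0_le_integral => //.
- by apply/measurable_EFinP/measurable_funM => //; exact: measurable_indic.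
- by move=> x _; rewrite lee_fin expR_ge0.
apply: filterS Y0a => x Y0xa _; rewrite lee_fin /=.
have e_le : expR (eta * Y 0%N x) <= expR (eta * a).
  by rewrite ler_expR ler_wpM2l// ltW.
by rewrite indicE; case: (_ \in _); rewrite ?mulr1 ?mulr0 ?expR_ge0.
Qed.

Hypotheses (rho_ge0 : 0 <= rho) (D_ge0 : 0 <= D).
Hypothesis C1 : forall n, cond_exp_le P (F n)
  (fun x => (expR (eta * (Y n.+1 x - Y n x)) *
             \1_[set y | a <= Y n y < b] x)%:E) rho.
Hypothesis C2 : forall n, cond_exp_le P (F n)
  (fun x => (expR (eta * (Y n.+1 x - a)) * \1_[set y | Y n y < a] x)%:E) D.

Lemma truncated_mgfS_le n :
  (J n.+1 <= rho%:E * J n + (D * expR (eta * a))%:E)%E.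
Proof.
pose X1 x := expR (eta * (Y n.+1 x - Y n x)) * \1_[set y | a <= Y n y < b] x.
pose X2 x := expR (eta * (Y n.+1 x - a)) * \1_[set y | Y n y < a] x.
pose h x := expR (eta * Y n x) * \1_(tau_gt Y b n.-1) x.
have mX1 : measurable_fun [set: T] X1.
  apply: measurable_funM; last apply: measurable_indic.
    apply: measurableT_comp => //; apply: measurable_funM => //.
    exact: measurable_funB.
  have -> : [set y | a <= Y n y < b] = Y n @^-1` `[a, b[.
    by apply/seteqP; split=> x /=; rewrite in_itv.
  exact: mY_itv.
have mX2 : measurable_fun [set: T] X2.
  apply: measurable_funM; last apply: measurable_indic.
    apply: measurableT_comp => //; apply: measurable_funM => //.
    exact: measurable_funB.
  have -> : [set y | Y n y < a] = Y n @^-1` `]-oo, a[.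
    by apply/seteqP; split=> x /=; rewrite in_itv.
  exact: mY_itv.
have Gh : G_measurable (F n) h.
  apply/(G_measurableP (sF n))/measurable_funM.
    apply: measurableT_comp => //; apply: measurable_funM => //.
    exact/(G_measurableP (sF n)).
  apply/measurable_indic/(g_sigma_measurableP (sF n)).
  by apply: (filtF.2 _ _ (leq_pred n)); exact: tau_gt_adapted.
have Gcst : G_measurable (F n) (fun=> expR (eta * a)).
  by apply/(G_measurableP (sF n)); exact: measurable_cst.
have X1_ge0 x : 0 <= X1 x by rewrite mulr_ge0 ?expR_ge0.
have X2_ge0 x : 0 <= X2 x by rewrite mulr_ge0 ?expR_ge0.
have h_ge0 x : 0 <= h x by rewrite mulr_ge0 ?expR_ge0.
have mh := G_measurable_measurable (sF n) _ Gh.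
apply: (@le_trans _ _
  (\int[P]_x ((h x * X1 x)%:E + (expR (eta * a) * X2 x)%:E))%E).
  apply: ge0_le_integral => //.
  - by apply/measurable_EFinP/measurable_funM => //; exact: measurable_indic.
  - under eq_fun do rewrite -EFinD.
    by apply/measurable_EFinP/measurable_funD; exact: measurable_funM.
  - by move=> x _; rewrite -EFinD lee_fin; exact: expR_tau_gtS_le.
rewrite ge0_integralD//; last 4 first.
- by move=> x _; rewrite lee_fin mulr_ge0.
- exact/measurable_EFinP/measurable_funM.
- by move=> x _; rewrite lee_fin mulr_ge0 ?expR_ge0.
- exact/measurable_EFinP/measurable_funM.
have hX1_le :=
  cond_exp_le_integral_mul (sF n) mX1 X1_ge0 rho_ge0 (C1 n) Gh h_ge0.
have X2_le := cond_exp_le_integral_mul (sF n) mX2 X2_ge0 D_ge0 (C2 n) Gcst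
  (fun=> expR_ge0 _).
apply: leeD; first exact: hX1_le.
apply: le_trans X2_le _.
rewrite integral_cst// EFinM lee_wpmul2l ?lee_fin// -[leRHS]mule1.
by rewrite lee_wpmul2l ?lee_fin ?expR_ge0 ?probability_le1.
Qed.

End truncated_mgf.

Lemma affine_recursion_le {R : realFieldType} {u : nat -> \bar R} {r c u0 : R} :
  0 <= r -> r != 1 -> (u 0%N <= u0%:E)%E ->
  (forall n, (u n.+1 <= r%:E * u n + c%:E)%E) ->
  forall n, (u n <= (r ^+ n * u0 + (1 - r ^+ n) / (1 - r) * c)%:E)%E.
Proof.
move=> r_ge0 r_neq1 u0_le u_rec; elim=> [|n IH].
  by rewrite expr0 mul1r subrr !mul0r addr0.
apply: le_trans (u_rec n) _.
apply: le_trans (leeD (lee_wpmul2l _ IH) (lexx _)) _; first by rewrite lee_fin.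
rewrite -EFinM -EFinD lee_fin le_eqVlt; apply/orP; left; apply/eqP.
by rewrite exprS; field; rewrite subr_eq0 eq_sym.
Qed.

Theorem theorem3p1 (d : measure_display) (T : measurableType d) (R : realType)
  (P : probability T R) (F : nat -> set (set T)) (Y : nat -> T -> R)
  (a b eta rho D : R) :
  filtration F -> F 0%N = trivial_sigma -> adapted F Y ->
  a < b -> 0 < eta -> 0 < rho < 1 -> 1 <= D ->
  (* (C0) *)
  {ae P, forall x, 0 <= Y 0%N x < a} ->
  (* (C1) *)
  (forall k : nat, cond_exp_le P (F k)
     (fun x => (expR (eta * (Y k.+1 x - Y k x)) *
                \1_[set y | a <= Y k y < b] x)%:E) rho) ->
  (* (C2) *)
  (forall k : nat, cond_exp_le P (F k)
     (fun x => (expR (eta * (Y k.+1 x - a)) *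
                \1_[set y | Y k y < a] x)%:E) D) ->
  forall k : nat, (1 <= k)%N ->
    (\int[P]_x (expR (eta * Y k x) * \1_(tau_gt Y b k.-1) x)%:E
     <= (expR (eta * a) *
         (rho ^+ k + (1 - rho ^+ k) / (1 - rho) * D))%:E)%E.
Proof.
move=> filtF _ adaptY _ eta_gt0 /andP[rho_gt0 rho_lt1] D_ge1 C0 C1 C2 k _.
have D_ge0 : 0 <= D := le_trans ler01 D_ge1.
have -> : expR (eta * a) * (rho ^+ k + (1 - rho ^+ k) / (1 - rho) * D) =
    rho ^+ k * expR (eta * a) +
    (1 - rho ^+ k) / (1 - rho) * (D * expR (eta * a)).
  by ring.
apply: (affine_recursion_le (u := truncated_mgf P Y b eta))
  (ltW rho_gt0) (negbT (lt_eqF rho_lt1)) _ _ k.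
- apply: truncated_mgf0_le filtF adaptY (ltW eta_gt0) _.
  by apply: filterS C0 => x /andP[].
- exact: truncated_mgfS_le filtF adaptY (ltW rho_gt0) D_ge0 C1 C2.
Qed.
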